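(* Let $\mu_1,\mu_2$ be compactly supported positive Borel measures on $\mathbb{C}$, with $\mu_2$ having infinite support, such that $\beta(\mu_1,\mu_2)<\infty$. Then $\operatorname{supp}(\mu_1)\subset \operatorname{Pc}(\operatorname{supp}(\mu_2))$.
   Context: For positive Borel measures $\mu_1,\mu_2$ on $\mathbb{C}$ with finite moments and $\mu_2$ infinitely supported, $\beta(\mu_1,\mu_2)=\sup\{\int|p|^2d\mu_1/\int|p|^2d\mu_2 : p\in\mathbb{P}[z]\setminus\{0\}\}\in(0,\infty]$ (equivalently, the limit of the largest generalized eigenvalues of the $(n+1)\times(n+1)$ truncations of $\mathbf{M}(\mu_1)$ with respect to those of $\mathbf{M}(\mu_2)$, where $\mathbf{M}(\mu)=(\int z^i\bar z^jd\mu)_{i,j\ge0}$). For a compact $K\subset\mathbb{C}$, its polynomially convex hull is $\operatorname{Pc}(K)=\{z\in\mathbb{C}: |p(z)|\le\max_{\xi\in K}|p(\xi)| \text{ for all } p\in\mathbb{P}[z]\}$. *)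

From HB Require Import structures.
From mathcomp Require Import all_boot all_order all_algebra.
From mathcomp Require Import all_classical all_reals all_analysis.
From mathcomp Require Import complex.
Set Implicit Arguments. Unset Strict Implicit. Unset Printing Implicit Defensive.
Import Order.TTheory GRing.Theory Num.Theory.
Import numFieldNormedType.Exports.
Local Open Scope classical_set_scope.
Local Open Scope ring_scope.

(* The complex plane C is modelled as R * R (with its product Borel
   sigma-algebra and product topology); a point x is identified with the
   complex number x.1 + i x.2. *)
Definition plane (R : realType) := (R * R)%type.

Definition toC (R : realType) (x : R * R) : R[i] := Complex x.1 x.2.

Definition cabs (R : realType) (w : R[i]) : R := Normc.normc w.

Definition supp (R : realType)
  (mu : {measure set (R * R)%type -> \bar R}) : set (R * R)%type :=
  [set z | forall e : R, 0 < e -> (0 < mu (ball z e))%E].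

Definition finite_moments (R : realType)
  (mu : {measure set (R * R)%type -> \bar R}) : Prop :=
  forall n : nat, (\int[mu]_x ((cabs (toC x)) ^+ n)%:E < +oo)%E.

Definition sqint (R : realType)
  (mu : {measure set (R * R)%type -> \bar R}) (p : {poly R[i]}) : \bar R :=
  (\int[mu]_x ((cabs (p.[toC x])) ^+ 2)%:E)%E.

(* beta(mu1, mu2) = sup over nonzero polynomials p of
   int |p|^2 dmu1 / int |p|^2 dmu2, an extended real.
   (Under the standing hypotheses both integrals are finite and the
   denominator is positive, so the quotient is taken of real values.) *)
Definition beta (R : realType)
  (mu1 mu2 : {measure set (R * R)%type -> \bar R}) : \bar R :=
  ereal_sup [set ((fine (sqint mu1 p)) / (fine (sqint mu2 p)))%:E
            | p in [set p : {poly R[i]} | p != 0]].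

Definition Pc (R : realType) (K : set (R * R)%type) : set (R * R)%type :=
  [set z | forall p : {poly R[i]},
      cabs (p.[toC z]) <= sup [set cabs (p.[toC xi]) | xi in K]].

From HB Require Import structures.
From mathcomp Require Import all_boot all_order all_algebra.
From mathcomp Require Import all_classical all_reals all_analysis.
From mathcomp Require Import complex.
From mathcomp Require Import lra.
Import Order.TTheory GRing.Theory Num.Theory.
Import numFieldNormedType.Exports.
Local Open Scope classical_set_scope.
Local Open Scope ring_scope.

(** Suppose [|p z| > s := sup |p|] over [K = supp mu2] for some [z] in
   [supp mu1], and pick [s < c < |p z|].  On a ball [B] around [z] we have
   [|p| > c], so [int |p^n|^2 dmu1 >= c^(2n) mu1 B] with [mu1 B > 0], whereas
   [|p| <= s] holds mu2-almost everywhere (the complement of the support is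
   mu2-null), so [int |p^n|^2 dmu2] is at most [s^(2n)] times the total mass
   of mu2.  The ratios thus grow like [(c/s)^(2n)] and beta is infinite.
   Since [supp mu2] is infinite, [p] does not vanish on all of it, which makes
   [s > 0] and the denominators positive. *)

Section PolynomialBeta.
Context {R : realType}.
Local Notation T := (R * R)%type.
Local Notation Re := (@complex.Re R).
Local Notation Im := (@complex.Im R).
Implicit Types (mu : {measure set T -> \bar R}) (p q : {poly R[i]}).

Lemma cabsE (u : R[i]) : cabs u = Num.sqrt (Re u ^+ 2 + Im u ^+ 2).
Proof. by case: u. Qed.

Lemma cabs_ge0 (u : R[i]) : 0 <= cabs u.
Proof. by rewrite cabsE sqrtr_ge0. Qed.

Lemma cabs_gt0 {u : R[i]} : u != 0 -> 0 < cabs u.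
Proof.
move=> u0; rewrite lt_neqAle cabs_ge0 andbT eq_sym.
by apply: contra u0 => /eqP/Normc.eq0_normc ->.
Qed.

Lemma cabsX (u : R[i]) n : cabs (u ^+ n) = cabs u ^+ n.
Proof.
elim: n => [|n IH]; first by rewrite !expr0 /cabs Normc.normc1.
by rewrite !exprS -IH; exact: Normc.normcM.
Qed.

Lemma toC_inj : injective (@toC R).
Proof. by move=> [a b] [c d] [/= -> ->]. Qed.

Definition cont_meas (f : T -> R) := continuous f /\ measurable_fun setT f.

Lemma cont_meas_fst : cont_meas fst.
Proof. by split; [move=> x; exact: cvg_fst | exact: measurable_fst]. Qed.

Lemma cont_meas_snd : cont_meas snd.
Proof. by split; [move=> x; exact: cvg_snd | exact: measurable_snd]. Qed.

Lemma cont_meas_cst c : cont_meas (fun=> c).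
Proof. by split; [move=> x; exact: cvg_cst | exact: measurable_cst]. Qed.

Lemma cont_measD f g :
  cont_meas f -> cont_meas g -> cont_meas (fun x => f x + g x).
Proof.
move=> [cf mf] [cg mg]; split; last exact: measurable_realfun.measurable_funD.
by move=> x; apply: continuousD; [exact: cf | exact: cg].
Qed.

Lemma cont_measB f g :
  cont_meas f -> cont_meas g -> cont_meas (fun x => f x - g x).
Proof.
move=> [cf mf] [cg mg]; split; last exact: measurable_realfun.measurable_funB.
by move=> x; apply: continuousB; [exact: cf | exact: cg].
Qed.

Lemma cont_measM f g :
  cont_meas f -> cont_meas g -> cont_meas (fun x => f x * g x).
Proof.
move=> [cf mf] [cg mg]; split; last exact: measurable_realfun.measurable_funM.
by move=> x; apply: continuousM; [exact: cf | exact: cg].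
Qed.

Lemma cont_meas_sqrt f : cont_meas f -> cont_meas (fun x => Num.sqrt (f x)).
Proof.
move=> [cf mf]; split.
  by move=> x; apply: continuous_comp; [exact: cf | exact: sqrt_continuous].
apply: measurableT_comp mf.
exact: measurable_realfun.continuous_measurable_fun (@sqrt_continuous R).
Qed.

Lemma cont_meas_horner p :
  cont_meas (fun x => Re p.[toC x]) /\ cont_meas (fun x => Im p.[toC x]).
Proof.
elim/poly_ind: p => [|p c [hr hi]].
  by split; under eq_fun do rewrite horner0; exact: cont_meas_cst.
have -> : (fun x => Re (p * 'X + c%:P).[toC x]) =
    (fun x => Re p.[toC x] * x.1 - Im p.[toC x] * x.2 + Re c).
  by apply: funext => x; rewrite hornerMXaddC; case: p.[toC x]; case: c.
have -> : (fun x => Im (p * 'X + c%:P).[toC x]) =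
    (fun x => Re p.[toC x] * x.2 + Im p.[toC x] * x.1 + Im c).
  by apply: funext => x; rewrite hornerMXaddC; case: p.[toC x]; case: c.
have [c1 c2] := (cont_meas_fst, cont_meas_snd).
by split; apply: cont_measD (cont_meas_cst _);
  [apply: cont_measB | apply: cont_measD]; apply: cont_measM.
Qed.

Lemma cont_meas_cabs_horner p : cont_meas (fun x => cabs p.[toC x]).
Proof.
have [hr hi] := cont_meas_horner p.
have -> : (fun x => cabs p.[toC x]) = (fun x =>
    Num.sqrt (Re p.[toC x] * Re p.[toC x] + Im p.[toC x] * Im p.[toC x])).
  by apply: funext => x; rewrite cabsE !expr2.
by apply: cont_meas_sqrt; apply: cont_measD; apply: cont_measM.
Qed.

Lemma ball_gt_of_continuous {f : T -> R} {x : T} {c : R} :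
  {for x, continuous f} -> c < f x ->
  exists2 e, 0 < e & forall y, ball x e y -> c < f y.
Proof.
move=> cf cx; have [e e0 he] := (nbhs_ballP _ _).1 (cvgr_gt _ cf _ cx).
by exists e.
Qed.

Lemma cabs_horner_le_sup {K : set T} p {x : T} : compact K -> K x ->
  cabs p.[toC x] <= sup [set cabs p.[toC y] | y in K].
Proof.
move=> cK Kx; apply: sup_upper_bound; last by exists x.
apply: compact_has_sup; first by exists (cabs p.[toC x]), x.
apply: continuous_compact => //; apply: continuous_subspaceT.
exact: (cont_meas_cabs_horner p).1.
Qed.

Lemma exists_nonroot {A : set T} {p} : p != 0 -> infinite_set A ->
  exists2 w, A w & p.[toC w] != 0.
Proof.
move=> p0 infA; apply: contrapT => nonroot.
have [B BA cardB] := infinite_set_fset (size p) infA.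
have roots : all (root p) (map (@toC R) (finmap.enum_fset B)).
  apply/allP => _ /mapP[x xB ->]; apply/negPn/negP => px.
  by apply: nonroot; exists x => //; apply: BA.
have := max_poly_roots p0 roots.
rewrite (map_inj_uniq toC_inj) finmap.fset_uniq size_map ltnNge cardB.
by move=> /(_ isT).
Qed.

Definition rat_ball (t : rat * rat * rat) : set T :=
  ball (ratr t.1.1 : R, ratr t.1.2 : R) (ratr t.2).

Lemma measurable_ball_plane (x : T) e : measurable (ball x e).
Proof. by apply: measurableX; exact: measurable_realfun.measurable_ball. Qed.

Lemma rat_ball_between (x : T) e : 0 < e ->
  exists t, rat_ball t x /\ rat_ball t `<=` ball x e.
Proof.
move=> e0.
have rat_near (y d : R) : 0 < d -> exists r : rat, ball y d (ratr r).
  move=> d0.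
  have [|z [yz [r _ rz]]] := @dense_rat R (ball y d) _ (ball_open y d).
    by exists y; exact: ballxx.
  by exists r; rewrite rz.
have [r] := rat_near (e / 4) (e / 4) (divr_gt0 e0 (ltr0Sn _ 3)).
rewrite /ball /= ltr_distlC => /andP[r_gt r_lt].
have r0 : 0 < (ratr r : R) by lra.
have [a xa] := rat_near x.1 _ r0; have [b xb] := rat_near x.2 _ r0.
exists (a, b, r); split; first by split; apply: ball_sym.
move=> y ry; have : ball x (ratr r + ratr r) y by apply: ball_triangle ry.
by apply: le_ball; lra.
Qed.

(* The complement of the support is covered by the countably many
   null rational balls. *)
Lemma supp_compl_negligible mu : mu.-negligible (~` supp mu).
Proof.
pose B k : set T := if unpickle k is Some t then
  (if pselect (mu (rat_ball t) = 0%E) then rat_ball t else set0) else set0.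
apply: (negligibleS _ (negligible_bigcup (F := B) _)).
  move=> x /= xNK.
  have [e e0 xe] : exists2 e : R, 0 < e & mu (ball x e) = 0%E.
    apply: contrapT => hne; apply: xNK => e e0.
    by rewrite lt0e measure_ge0 andbT; apply/eqP => h; apply: hne; exists e.
  have [t [tx te]] := @rat_ball_between x e e0.
  exists (pickle t); first by [].
  rewrite /B pickleK.
  destruct pselect as [|nt]; first by [].
  exfalso; apply: nt; apply/eqP.
  rewrite -measure_le0 -xe le_measure // inE; exact: measurable_ball_plane.
move=> k; rewrite /B; case: (unpickle k) => [t|]; last exact: negligible_set0.
destruct pselect as [t0|nt]; last exact: negligible_set0.
by apply/negligibleP => //; exact: measurable_ball_plane.
Qed.

Lemma integral_le_on_supp mu (f : T -> R) (b : R) :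
  measurable_fun setT f -> (forall x, 0 <= f x) -> 0 <= b ->
  (forall x, supp mu x -> f x <= b) ->
  (\int[mu]_x (f x)%:E <= b%:E * mu setT)%E.
Proof.
move=> mf f0 b0 fb; rewrite -(integral_cst mu measurableT b%:E).
apply: ae_ge0_le_integral => //.
- by move=> x _; rewrite lee_fin.
- exact/measurable_realfun.measurable_EFinP.
apply: negligibleS (supp_compl_negligible mu) => x /= nfx Kx.
by apply: nfx => _; rewrite lee_fin fb.
Qed.

Lemma integral_ge_on mu (A : set T) (f : T -> R) (b : R) :
  measurable A -> measurable_fun setT f -> (forall x, 0 <= f x) -> 0 <= b ->
  (forall x, A x -> b <= f x) -> (b%:E * mu A <= \int[mu]_x (f x)%:E)%E.
Proof.
move=> mA mf f0 b0 fb; rewrite -(integral_cst mu mA b%:E).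
have le_on_A : (\int[mu]_(x in A) cst b%:E x <= \int[mu]_(x in A) (f x)%:E)%E.
  apply: ge0_le_integral => //.
  by apply/measurable_realfun.measurable_EFinP; exact: measurable_funS mf.
apply: le_trans le_on_A _; apply: ge0_subset_integral => //.
- exact/measurable_realfun.measurable_EFinP.
- by move=> x _; rewrite lee_fin.
Qed.

Lemma measurable_sqr_cabs_horner p :
  measurable_fun setT (fun x => cabs p.[toC x] ^+ 2).
Proof.
exact: measurable_realfun.measurable_funX (cont_meas_cabs_horner p).2.
Qed.

Lemma sqint_ge mu (A : set T) p b : measurable A -> 0 <= b ->
  (forall x, A x -> b <= cabs p.[toC x]) ->
  ((b ^+ 2)%:E * mu A <= sqint mu p)%E.
Proof.
move=> mA b0 bp; apply: integral_ge_on => //.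
- exact: measurable_sqr_cabs_horner.
- by move=> x; exact: sqr_ge0.
- exact: sqr_ge0.
- by move=> x Ax; rewrite lerXn2r ?nnegrE ?cabs_ge0 ?bp.
Qed.

Lemma sqint_le mu p b : 0 <= b ->
  (forall x, supp mu x -> cabs p.[toC x] <= b) ->
  (sqint mu p <= (b ^+ 2)%:E * mu setT)%E.
Proof.
move=> b0 pb; apply: integral_le_on_supp.
- exact: measurable_sqr_cabs_horner.
- by move=> x; exact: sqr_ge0.
- exact: sqr_ge0.
- by move=> x Kx; rewrite lerXn2r ?nnegrE ?cabs_ge0 ?pb.
Qed.

Lemma sqint_lty mu p : compact (supp mu) -> (mu setT < +oo)%E ->
  (sqint mu p < +oo)%E.
Proof.
move=> cK muT; pose b := Num.max 0 (sup [set cabs p.[toC y] | y in supp mu]).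
apply: le_lt_trans (@sqint_le mu p b _ _) _.
- by rewrite le_max lexx.
- by move=> x Kx; rewrite le_max cabs_horner_le_sup ?orbT.
by apply: lte_mul_pinfty; rewrite ?lee_fin ?sqr_ge0.
Qed.

Lemma sqint_gt0 {mu p w} : supp mu w -> p.[toC w] != 0 -> (0 < sqint mu p)%E.
Proof.
move=> Kw pw; have pw_gt0 := cabs_gt0 pw.
have half_lt : cabs p.[toC w] / 2 < cabs p.[toC w] by lra.
have [e e0 pe] :=
  ball_gt_of_continuous ((cont_meas_cabs_horner p).1 w) half_lt.
apply: lt_le_trans (@sqint_ge mu (ball w e) p (cabs p.[toC w] / 2) _ _ _).
- by apply: mule_gt0; [rewrite lte_fin exprn_gt0 // divr_gt0 | exact: Kw].
- exact: measurable_ball_plane.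
- by rewrite divr_ge0 // ltW.
- by move=> x /pe /ltW.
Qed.

Lemma finite_moments_mass_lty {mu} : finite_moments mu -> (mu setT < +oo)%E.
Proof.
move=> /(_ 0%N); under eq_integral do rewrite expr0.
by rewrite integral_cst // mul1e.
Qed.

Lemma beta_ge_ratio mu1 mu2 p (a b : R) : p != 0 -> 0 <= a ->
  (a%:E <= sqint mu1 p < +oo)%E -> (0 < sqint mu2 p <= b%:E)%E ->
  ((a / b)%:E <= beta mu1 mu2)%E.
Proof.
move=> p0 a0 num den.
have ub : ((fine (sqint mu1 p) / fine (sqint mu2 p))%:E <= beta mu1 mu2)%E.
  by apply: ereal_sup_ubound; exists p.
apply: le_trans _ ub.
move: (sqint mu1 p) (sqint mu2 p) num den => [N||] [D||] //=;
  rewrite ?ltxx ?andbF // !lee_fin !lte_fin => /andP[aN _] /andP[D0 Db].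
have b0 : 0 < b := lt_le_trans D0 Db.
apply: ler_pM => //; first by rewrite invr_ge0 ltW.
by rewrite lef_pV2 ?posrE.
Qed.

Lemma ler_Bernoulli n {x : R} : 0 <= x -> 1 + n%:R * x <= (1 + x) ^+ n.
Proof.
move=> x0; elim: n => [|n IH]; first by rewrite mul0r addr0 expr0.
rewrite exprS -natr1.
have x1 : 0 <= 1 + x by lra.
have := ler_wpM2l x1 IH.
have : 0 <= n%:R * x * x by rewrite !mulr_ge0.
move: (n%:R : R) ((1 + x) ^+ n) => m P; nra.
Qed.

Lemma ge_geometric_pinfty (y : \bar R) (rho k : R) : 1 < rho -> 0 < k ->
  (forall n, (rho ^+ n * k)%:E <= y)%E -> y = +oo%E.
Proof.
move=> rho1 k0; case: y => [r||] // ge_geo; last by have := ge_geo 0%N.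
pose n := (Num.truncn (r / k / (rho - 1))).+1.
have := ge_geo n; rewrite lee_fin -ler_pdivlMr //.
have d0 : 0 < rho - 1 by rewrite subr_gt0.
have := ler_Bernoulli n (ltW d0).
rewrite [1 + (rho - 1)]addrC subrK => bern geo.
have : r / k / (rho - 1) < n%:R := truncnS_gt _.
rewrite ltr_pdivrMr // => lt_n.
have : 0 <= n%:R * (rho - 1) by rewrite mulr_ge0 // ltW.
exfalso; lra.
Qed.

Lemma fineK_measure {mu} {A : set T} : (mu setT < +oo)%E -> measurable A ->
  mu A = (fine (mu A))%:E.
Proof.
move=> muT mA; rewrite fineK // ge0_fin_numE ?measure_ge0 //.
by apply: le_lt_trans muT; rewrite le_measure ?inE.
Qed.

Lemma beta_pinfty_of_peak {mu1 mu2 q z w} {s c : R} :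
  (mu1 setT < +oo)%E -> (mu2 setT < +oo)%E -> compact (supp mu1) ->
  0 < s -> s < c ->
  supp mu1 z -> c < cabs q.[toC z] -> supp mu2 w -> q.[toC w] != 0 ->
  (forall x, supp mu2 x -> cabs q.[toC x] <= s) -> beta mu1 mu2 = +oo%E.
Proof.
move=> mu1_lty mu2_lty cK1 s0 sc Kz cqz Kw qw qs.
have [e e0 ce] :=
  ball_gt_of_continuous ((cont_meas_cabs_horner q).1 z) cqz.
set m1 := fine (mu1 (ball z e)); set m2 := fine (mu2 setT).
have m1E : mu1 (ball z e) = m1%:E :=
  fineK_measure mu1_lty (measurable_ball_plane _ _).
have m2E : mu2 setT = m2%:E := fineK_measure mu2_lty measurableT.
have m1_gt0 : 0 < m1 by rewrite -lte_fin -m1E; exact: Kz.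
have m2_gt0 : 0 < m2.
  rewrite -lte_fin -m2E; apply: lt_le_trans (Kw 1 ltr01) _.
  by rewrite le_measure ?inE //; exact: measurable_ball_plane.
have q0 : q != 0 by apply: contraNneq qw => ->; rewrite horner0.
apply: (@ge_geometric_pinfty _ ((c / s) ^+ 2) (m1 / m2)).
- by rewrite expr_gt1 ?ltr_pdivlMr ?mul1r // divr_ge0 // ltW // (lt_trans s0).
- exact: divr_gt0.
move=> n; rewrite -exprM mulnC exprM !expr_div_n mulf_div.
apply: (@beta_ge_ratio mu1 mu2 (q ^+ n)); first by rewrite expf_neq0.
- by rewrite mulr_ge0 ?sqr_ge0 // ltW.
- rewrite sqint_lty // andbT EFinM -m1E; apply: sqint_ge.
  + exact: measurable_ball_plane.
  + by rewrite exprn_ge0 // ltW // (lt_trans s0).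
  + move=> x /ce /ltW cx; rewrite horner_exp cabsX.
    by rewrite lerXn2r ?nnegrE ?cabs_ge0 // ltW // (lt_trans s0).
- rewrite (sqint_gt0 Kw) ?horner_exp ?expf_neq0 //= EFinM -m2E.
  apply: sqint_le; first by rewrite exprn_ge0 // ltW.
  move=> x Kx; rewrite horner_exp cabsX.
  by rewrite lerXn2r ?nnegrE ?cabs_ge0 ?qs ?ltW.
Qed.

End PolynomialBeta.

Theorem theorem1 (R : realType)
  (mu1 mu2 : {measure set (R * R)%type -> \bar R}) :
  finite_moments mu1 -> finite_moments mu2 ->
  compact (supp mu1) -> compact (supp mu2) ->
  ~ finite_set (supp mu2) ->
  (beta mu1 mu2 < +oo)%E ->
  supp mu1 `<=` Pc (supp mu2).
Proof.
move=> fm1 fm2 cK1 cK2 inf2 beta_lty z Kz p; rewrite leNgt; apply/negP.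
set s := sup _ => s_lt.
have [w0 Kw0] := infinite_setN0 inf2.
have s_ge0 : 0 <= s := le_trans (cabs_ge0 _) (cabs_horner_le_sup p cK2 Kw0).
have p0 : p != 0.
  by apply: contraTneq s_lt => ->; rewrite horner0 /cabs Normc.normc0 -leNgt.
have [w Kw pw] := exists_nonroot p0 inf2.
have s_gt0 : 0 < s := lt_le_trans (cabs_gt0 pw) (cabs_horner_le_sup p cK2 Kw).
pose c := (cabs p.[toC z] + s) / 2.
have sc : s < c by rewrite /c; lra.
have cz : c < cabs p.[toC z] by rewrite /c; lra.
have beta_infty : beta mu1 mu2 = +oo%E.
  apply: (beta_pinfty_of_peak (finite_moments_mass_lty fm1)
    (finite_moments_mass_lty fm2) cK1 s_gt0 sc Kz cz Kw pw).
  by move=> x Kx; exact: cabs_horner_le_sup.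
by move: beta_lty; rewrite beta_infty ltxx.
Qed.
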